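(* Let $L>0$, $\xi_{\mathrm{L}}<0$, $a>0$, $b>0$, and fix $d_w$ with $0<d_w\le L$. Then the maximizer over $\theta_w\in[0,\pi/2]$ of $\theta_w\mapsto f(d_w,\theta_w)$ is unique; denoting it by $\theta_w^\circ(d_w)$, it is the unique solution in $\theta_w$ of $$\xi_{\mathrm{L}}L\sin(\theta_w)+\frac{180\, b}{\pi}\,\frac{\mathcal{G}(\theta_w)}{|L-d_w\cos(\theta_w)|}\left[1-p_b(d_w,\theta_w)\right]=0,$$ where $\mathcal{G}(\theta_w)=(L^2+d_w^2)\cos(\theta_w)-d_wL\left[1+\cos^2(\theta_w)\right]$. Moreover, $\theta_w^\circ(d_w)$ lies in the closed interval $[0,\arccos(d_w/L)]$, and $\partial f(d_w,\theta_w)/\partial\theta_w<0$ for $\arccos(d_w/L)\le\theta_w\le\pi/2$.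
   Context: Geometric setting: Willie and Bob are ground points at distance $L>0$; a UAV lies in the vertical plane through them, on Bob's side, at distance $d_w>0$ from Willie and at elevation angle $\theta_w\in[0,\pi/2]$ (radians) seen from Willie. Define $d_b(d_w,\theta_w)=\sqrt{L^2+d_w^2-2d_wL\cos(\theta_w)}$, $$p_b(d_w,\theta_w)=\frac{1}{1+a\exp\!\left(-b\left[\frac{180}{\pi}\arcsin\!\left(\frac{d_w\sin(\theta_w)}{d_b(d_w,\theta_w)}\right)-a\right]\right)},$$ and $f(d_w,\theta_w)=d_b(d_w,\theta_w)^{\xi_{\mathrm{L}}}\,p_b(d_w,\theta_w)$, with $\xi_{\mathrm{L}}<0$ a path-loss exponent and $a,b>0$ environment constants. *)

From Stdlib Require Import Reals.
From Coquelicot Require Import Coquelicot.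
Open Scope R_scope.

Definition d_b (L dw th : R) : R :=
  sqrt (L ^ 2 + dw ^ 2 - 2 * dw * L * cos th).

(* LoS probability p_b(d_w, theta_w); elevation angle converted to degrees *)
Definition p_b (L a b dw th : R) : R :=
  1 / (1 + a * exp (- b * (180 / PI * asin (dw * sin th / d_b L dw th) - a))).

Definition fobj (L xi a b dw th : R) : R :=
  Rpower (d_b L dw th) xi * p_b L a b dw th.

Definition G (L dw th : R) : R :=
  (L ^ 2 + dw ^ 2) * cos th - dw * L * (1 + (cos th) ^ 2).

Definition stat_eq (L xi a b dw th : R) : R :=
  xi * L * sin th
  + 180 * b / PI * (G L dw th / Rabs (L - dw * cos th)) * (1 - p_b L a b dw th).

From Stdlib Require Import Reals Lra.
From Coquelicot Require Import Coquelicot.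
Open Scope R_scope.

(* Differentiating, [df/dθ = f · (dw / d_b²) · stat_eq]: the elevation angle at
   Bob has derivative [dw (L cos θ - dw) / d_b²], and [G = (L cos θ - dw)(L - dw cos θ)]
   with [L - dw cos θ > 0].  On [[0, A]], [A = arccos (dw / L)], [stat_eq] is strictly
   decreasing: [ξ L sin θ] decreases, while [L cos θ - dw >= 0] and [1 - p_b] are
   nonincreasing there because the elevation angle grows.  It is positive at [0] and
   negative on [[A, π/2]], so it has a single zero [θ°], and [f] strictly increases
   before [θ°] and strictly decreases after it. *)

Lemma is_derive_Rpower_comp (g : R -> R) (p x dg : R) :
  0 < g x -> is_derive g x dg ->
  is_derive (fun t => Rpower (g t) p) x (p * Rpower (g x) p * dg / g x).
Proof.
  intros hg hd. unfold Rpower. auto_derive.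
  - repeat split; [eexists; exact hd | exact hg].
  - replace (Derive (fun s => g s) x) with dg by (symmetry; now apply is_derive_unique).
    field. lra.
Qed.

Lemma nondecreasing_of_derive_nonneg (f df : R -> R) (lo hi : R) :
  (forall c, lo <= c <= hi -> is_derive f c (df c)) ->
  (forall c, lo <= c <= hi -> 0 <= df c) ->
  forall x y, lo <= x <= y -> y <= hi -> f x <= f y.
Proof.
  intros hd hdf x y hxy hy.
  destruct (Req_dec x y) as [<- | hne]; [lra |].
  destruct (MVT_cor2 f df x y ltac:(lra)) as [c [hc hcxy]].
  { intros c hc. apply is_derive_Reals, hd. lra. }
  pose proof (hdf c ltac:(lra)). nra.
Qed.

Lemma strict_max_of_derive_sign (f df : R -> R) (lo hi th : R) :
  lo <= th <= hi ->
  (forall c, lo <= c <= hi -> is_derive f c (df c)) ->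
  (forall c, lo <= c < th -> 0 < df c) ->
  (forall c, th < c <= hi -> df c < 0) ->
  forall t, lo <= t <= hi -> t <> th -> f t < f th.
Proof.
  intros hth hd hpos hneg t ht hne.
  assert (hd' : forall c, lo <= c <= hi -> derivable_pt_lim f c (df c))
    by (intros; apply is_derive_Reals, hd; auto).
  destruct (Rlt_or_le t th) as [hlt | hle].
  - destruct (MVT_cor2 f df t th hlt) as [c [hc hct]].
    { intros c hc. apply hd'. lra. }
    pose proof (hpos c ltac:(lra)). nra.
  - destruct (MVT_cor2 f df th t ltac:(lra)) as [c [hc hct]].
    { intros c hc. apply hd'. lra. }
    pose proof (hneg c ltac:(lra)). nra.
Qed.

Lemma decreasing_sign_change (g : R -> R) (lo mid hi : R) :
  lo < mid <= hi -> continuity g -> 0 < g lo ->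
  (forall x y, lo <= x < y -> y <= mid -> g y < g x) ->
  (forall t, mid <= t <= hi -> g t < 0) ->
  exists th, lo <= th <= mid /\ g th = 0 /\
    (forall t, lo <= t < th -> 0 < g t) /\ (forall t, th < t <= hi -> g t < 0).
Proof.
  intros hlt hg hlo hdecr hneg.
  destruct (IVT (fun t => - g t) lo mid (continuity_opp g hg) (proj1 hlt)) as [th [hth hzero]].
  - lra.
  - pose proof (hneg mid ltac:(lra)). lra.
  - exists th. split; [exact hth | split; [lra | split]].
    + intros t ht. pose proof (hdecr t th ht ltac:(lra)). lra.
    + intros t ht. destruct (Rle_or_lt t mid).
      * pose proof (hdecr th t ltac:(lra) ltac:(lra)). lra.
      * apply hneg. lra.
Qed.

Lemma cos_ge_of_le_acos (x t : R) : -1 <= x <= 1 -> 0 <= t <= acos x -> x <= cos t.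
Proof.
  intros hx ht. pose proof (acos_bound x).
  destruct (Req_dec t (acos x)) as [-> | hne].
  - rewrite cos_acos; lra.
  - rewrite <- (cos_acos x) by exact hx. left. apply cos_decreasing_1; lra.
Qed.

Lemma cos_le_of_acos_le (x t : R) : -1 <= x <= 1 -> acos x <= t <= PI -> cos t <= x.
Proof.
  intros hx ht. pose proof (acos_bound x).
  destruct (Req_dec t (acos x)) as [-> | hne].
  - rewrite cos_acos; lra.
  - rewrite <- (cos_acos x) by exact hx. left. apply cos_decreasing_1; lra.
Qed.

Lemma acos_lt_PI2 (x : R) : 0 < x <= 1 -> acos x < PI / 2.
Proof.
  intros hx. destruct (Rlt_or_le (acos x) (PI / 2)) as [h | h]; [exact h |].
  pose proof (cos_ge_of_le_acos x (PI / 2) ltac:(lra) ltac:(pose proof PI_RGT_0; lra)).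
  rewrite cos_PI2 in *. lra.
Qed.

Section Geometry.

Variables L dw : R.
Hypotheses (hdw0 : 0 < dw) (hdwL : dw < L).

Lemma d_b_radicand_pos (t : R) : 0 < L ^ 2 + dw ^ 2 - 2 * dw * L * cos t.
Proof.
  pose proof (COS_bound t).
  assert (0 <= dw * L * (1 - cos t)) by (apply Rmult_le_pos; nra).
  nra.
Qed.

Lemma d_b_pos (t : R) : 0 < d_b L dw t.
Proof. apply sqrt_lt_R0, d_b_radicand_pos. Qed.

Lemma d_b_sqr (t : R) : d_b L dw t ^ 2 = L ^ 2 + dw ^ 2 - 2 * dw * L * cos t.
Proof. apply pow2_sqrt, Rlt_le, d_b_radicand_pos. Qed.

Lemma L_sub_dw_cos_pos (t : R) : 0 < L - dw * cos t.
Proof. pose proof (COS_bound t). nra. Qed.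

Lemma is_derive_d_b (t : R) : is_derive (d_b L dw) t (dw * L * sin t / d_b L dw t).
Proof.
  pose proof (d_b_radicand_pos t). unfold d_b. auto_derive.
  - replace (L * (L * 1) + dw * (dw * 1) + - (2 * dw * L * cos t))
      with (L ^ 2 + dw ^ 2 - 2 * dw * L * cos t) by ring. lra.
  - replace (L * (L * 1) + dw * (dw * 1) + - (2 * dw * L * cos t))
      with (L ^ 2 + dw ^ 2 - 2 * dw * L * cos t) by ring.
    fold (d_b L dw t). pose proof (d_b_pos t). field. lra.
Qed.

Definition elev (t : R) : R := asin (dw * sin t / d_b L dw t).

(* [dw sin t / d_b] and [(L - dw cos t) / d_b] are the sine and cosine of the
   elevation angle seen from Bob. *)
Lemma elev_sin_sqr_add_cos_sqr (t : R) :
  (dw * sin t / d_b L dw t) ^ 2 + ((L - dw * cos t) / d_b L dw t) ^ 2 = 1.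
Proof.
  pose proof (d_b_pos t) as hd.
  assert (hnum : (dw * sin t) ^ 2 + (L - dw * cos t) ^ 2 = d_b L dw t ^ 2).
  { rewrite d_b_sqr. replace ((dw * sin t) ^ 2) with (dw ^ 2 * (sin t)²) by (unfold Rsqr; ring).
    rewrite sin2. unfold Rsqr. ring. }
  transitivity (((dw * sin t) ^ 2 + (L - dw * cos t) ^ 2) / d_b L dw t ^ 2).
  - field. lra.
  - rewrite hnum. field. lra.
Qed.

Lemma is_derive_elev (t : R) :
  is_derive elev t (dw * (L * cos t - dw) / d_b L dw t ^ 2).
Proof.
  pose proof (d_b_pos t) as hd. pose proof (L_sub_dw_cos_pos t) as hc.
  set (u := dw * sin t / d_b L dw t).
  set (v := (L - dw * cos t) / d_b L dw t).
  assert (huv : u ^ 2 + v ^ 2 = 1) by apply elev_sin_sqr_add_cos_sqr.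
  assert (hv : 0 < v) by (apply Rdiv_lt_0_compat; lra).
  assert (hu : -1 < u < 1) by nra.
  assert (hasin : is_derive asin u (1 / v)).
  { apply is_derive_Reals. rewrite <- (sqrt_pow2 v) by lra.
    replace (v ^ 2) with (1 - u²) by (unfold Rsqr; lra).
    apply (derive_pt_eq_1 _ _ _ (derivable_pt_asin u hu)), derive_pt_asin. }
  assert (hu' : is_derive (fun s => dw * sin s / d_b L dw s) t
                  (dw * (L * cos t - dw) * (L - dw * cos t) / d_b L dw t ^ 3)).
  { assert (hnum : is_derive (fun s => dw * sin s) t (dw * cos t))
      by (auto_derive; [exact I | ring]).
    assert (hsin2 : sin t ^ 2 = 1 - cos t ^ 2)
      by (rewrite <- !Rsqr_pow2; apply sin2).
    replace (dw * (L * cos t - dw) * (L - dw * cos t) / d_b L dw t ^ 3)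
      with ((dw * cos t * d_b L dw t - dw * sin t * (dw * L * sin t / d_b L dw t))
            / d_b L dw t ^ 2).
    - apply (is_derive_div (fun s => dw * sin s) (d_b L dw)); [exact hnum | apply is_derive_d_b | lra].
    - transitivity ((dw * cos t * d_b L dw t ^ 2 - dw ^ 2 * L * sin t ^ 2) / d_b L dw t ^ 3).
      + field. lra.
      + rewrite d_b_sqr, hsin2. field. lra. }
  unfold elev.
  replace (dw * (L * cos t - dw) / d_b L dw t ^ 2)
    with (scal (dw * (L * cos t - dw) * (L - dw * cos t) / d_b L dw t ^ 3) (1 / v)).
  - exact (is_derive_comp asin (fun s => dw * sin s / d_b L dw s) t _ _ hasin hu').
  - unfold scal, v; simpl; unfold mult; simpl. field. lra.
Qed.

End Geometry.

(* [p_b L a b dw t] is [logistic a b (elev L dw t)]; [180 / PI] converts the angle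
   to degrees. *)
Definition logistic (a b y : R) : R := 1 / (1 + a * exp (- b * (180 / PI * y - a))).

Lemma logistic_bounds (a b y : R) : 0 < a -> 0 < logistic a b y < 1.
Proof.
  intros ha. unfold logistic.
  assert (0 < a * exp (- b * (180 / PI * y - a))) by (apply Rmult_lt_0_compat; [lra | apply exp_pos]).
  split.
  - apply Rdiv_lt_0_compat; lra.
  - apply Rlt_div_l; lra.
Qed.

Lemma is_derive_logistic (a b y : R) : 0 < a ->
  is_derive (logistic a b) y (180 * b / PI * logistic a b y * (1 - logistic a b y)).
Proof.
  intros ha. pose proof PI_RGT_0.
  assert (0 < a * exp (- b * (180 / PI * y - a))) by (apply Rmult_lt_0_compat; [lra | apply exp_pos]).
  unfold logistic. auto_derive.
  - replace (180 / PI * y + - a) with (180 / PI * y - a) by ring. lra.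
  - replace (180 / PI * y + - a) with (180 / PI * y - a) by ring. field. lra.
Qed.

Lemma G_factor (L dw t : R) : G L dw t = (L * cos t - dw) * (L - dw * cos t).
Proof. unfold G. ring. Qed.

Section Objective.

Variables L xi a b dw : R.
Hypotheses (hxi : xi < 0) (ha : 0 < a) (hb : 0 < b) (hdw0 : 0 < dw) (hdwL : dw < L).

Let A := acos (dw / L).

Lemma p_b_bounds (t : R) : 0 < p_b L a b dw t < 1.
Proof. exact (logistic_bounds a b (elev L dw t) ha). Qed.

Lemma is_derive_p_b (t : R) :
  is_derive (p_b L a b dw) t
    (dw * (L * cos t - dw) / d_b L dw t ^ 2 *
     (180 * b / PI * p_b L a b dw t * (1 - p_b L a b dw t))).
Proof.
  exact (is_derive_comp (logistic a b) (elev L dw) t _ _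
           (is_derive_logistic a b _ ha) (is_derive_elev L dw hdw0 hdwL t)).
Qed.

Lemma stat_eq_simpl (t : R) :
  stat_eq L xi a b dw t
  = xi * L * sin t + 180 * b / PI * (L * cos t - dw) * (1 - p_b L a b dw t).
Proof.
  pose proof (L_sub_dw_cos_pos L dw hdw0 hdwL t).
  unfold stat_eq. rewrite G_factor, Rabs_right by lra. pose proof PI_RGT_0. field. split; lra.
Qed.

Lemma is_derive_fobj (t : R) :
  is_derive (fobj L xi a b dw) t
    (fobj L xi a b dw t * (dw / d_b L dw t ^ 2) * stat_eq L xi a b dw t).
Proof.
  pose proof (d_b_pos L dw hdw0 hdwL t). pose proof PI_RGT_0.
  rewrite stat_eq_simpl.
  pose proof (is_derive_mult _ _ t _ _
    (is_derive_Rpower_comp (d_b L dw) xi t _ ltac:(assumption) (is_derive_d_b L dw hdw0 hdwL t))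
    (is_derive_p_b t) ltac:(intros; apply Rmult_comm)) as hm.
  match type of hm with
  | is_derive _ _ ?d => replace (fobj L xi a b dw t * _ * _) with d
  end.
  - exact hm.
  - unfold fobj, plus, mult; simpl. field. lra.
Qed.

Lemma dw_div_L_bounds : 0 < dw / L < 1.
Proof. split; [apply Rdiv_lt_0_compat | apply Rlt_div_l]; lra. Qed.

Lemma acos_dw_div_L_bounds : 0 < A < PI / 2.
Proof.
  pose proof dw_div_L_bounds. split.
  - apply acos_bound_lt. lra.
  - apply acos_lt_PI2. lra.
Qed.

Lemma dw_le_L_cos (t : R) : 0 <= t <= A -> dw <= L * cos t.
Proof.
  intros ht. pose proof dw_div_L_bounds.
  pose proof (cos_ge_of_le_acos (dw / L) t ltac:(lra) ht) as hcos.
  apply Rle_div_l in hcos; lra.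
Qed.

Lemma L_cos_le_dw (t : R) : A <= t <= PI -> L * cos t <= dw.
Proof.
  intros ht. pose proof dw_div_L_bounds.
  pose proof (cos_le_of_acos_le (dw / L) t ltac:(lra) ht) as hcos.
  apply Rle_div_r in hcos; lra.
Qed.

Lemma continuity_stat_eq : continuity (stat_eq L xi a b dw).
Proof.
  intros t.
  apply (continuity_pt_ext
    (fun s => xi * L * sin s + 180 * b / PI * (L * cos s - dw) * (1 - p_b L a b dw s))).
  { intros s. symmetry. apply stat_eq_simpl. }
  apply derivable_continuous_pt, ex_derive_Reals_0. auto_derive.
  exists (dw * (L * cos t - dw) / d_b L dw t ^ 2 *
          (180 * b / PI * p_b L a b dw t * (1 - p_b L a b dw t))).
  apply is_derive_p_b.
Qed.

Lemma stat_gain_pos : 0 < 180 * b / PI.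
Proof. pose proof PI_RGT_0. apply Rdiv_lt_0_compat; lra. Qed.

Lemma p_b_nondecreasing (x y : R) : 0 <= x <= y -> y <= A -> p_b L a b dw x <= p_b L a b dw y.
Proof.
  apply (nondecreasing_of_derive_nonneg (p_b L a b dw)
    (fun c => dw * (L * cos c - dw) / d_b L dw c ^ 2 *
              (180 * b / PI * p_b L a b dw c * (1 - p_b L a b dw c))) 0 A).
  { intros c _. apply is_derive_p_b. }
  intros c hc.
  pose proof (dw_le_L_cos c hc). pose proof (d_b_pos L dw hdw0 hdwL c).
  pose proof (p_b_bounds c). pose proof stat_gain_pos.
  apply Rmult_le_pos.
  - apply Rmult_le_pos; [nra | apply Rlt_le, Rinv_0_lt_compat, pow_lt; lra].
  - apply Rmult_le_pos; nra.
Qed.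

Lemma stat_eq_decreasing (x y : R) :
  0 <= x < y -> y <= A -> stat_eq L xi a b dw y < stat_eq L xi a b dw x.
Proof.
  intros hxy hy. pose proof acos_dw_div_L_bounds. pose proof PI_RGT_0.
  rewrite !stat_eq_simpl.
  assert (hsin : sin x < sin y) by (apply sin_increasing_1; lra).
  assert (hcos : cos y < cos x) by (apply cos_decreasing_1; lra).
  pose proof (dw_le_L_cos y ltac:(lra)).
  pose proof (p_b_nondecreasing x y ltac:(lra) hy).
  pose proof (p_b_bounds y). pose proof stat_gain_pos.
  assert (xi * L * sin y < xi * L * sin x)
    by (apply Rmult_lt_gt_compat_neg_l; [nra | lra]).
  assert (L * cos y - dw <= L * cos x - dw) by nra.
  assert (180 * b / PI * (L * cos y - dw) * (1 - p_b L a b dw y)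
          <= 180 * b / PI * (L * cos x - dw) * (1 - p_b L a b dw x))
    by (rewrite !Rmult_assoc; apply Rmult_le_compat_l, Rmult_le_compat; lra).
  lra.
Qed.

Lemma stat_eq_neg (t : R) : A <= t <= PI / 2 -> stat_eq L xi a b dw t < 0.
Proof.
  intros ht. pose proof acos_dw_div_L_bounds. pose proof PI_RGT_0.
  rewrite stat_eq_simpl.
  pose proof (L_cos_le_dw t ltac:(lra)).
  assert (0 < sin t) by (apply sin_gt_0; lra).
  pose proof (p_b_bounds t). pose proof stat_gain_pos.
  assert (xi * L * sin t < 0) by (apply Rmult_neg_pos; nra).
  assert (0 <= 180 * b / PI * ((dw - L * cos t) * (1 - p_b L a b dw t)))
    by (apply Rmult_le_pos; [| apply Rmult_le_pos]; lra).
  assert (180 * b / PI * (L * cos t - dw) * (1 - p_b L a b dw t)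
          = - (180 * b / PI * ((dw - L * cos t) * (1 - p_b L a b dw t)))) by ring.
  lra.
Qed.

Lemma stat_eq_0_pos : 0 < stat_eq L xi a b dw 0.
Proof.
  rewrite stat_eq_simpl, sin_0, cos_0.
  pose proof (p_b_bounds 0). pose proof stat_gain_pos.
  assert (0 < 180 * b / PI * (L * 1 - dw) * (1 - p_b L a b dw 0))
    by (apply Rmult_lt_0_compat; [apply Rmult_lt_0_compat |]; lra).
  lra.
Qed.

Lemma fobj_derive_factor_pos (t : R) : 0 < fobj L xi a b dw t * (dw / d_b L dw t ^ 2).
Proof.
  pose proof (d_b_pos L dw hdw0 hdwL t). pose proof (p_b_bounds t).
  apply Rmult_lt_0_compat.
  - apply Rmult_lt_0_compat; [apply exp_pos | lra].
  - apply Rdiv_lt_0_compat, pow_lt; lra.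
Qed.

Lemma stat_eq_sign_change :
  exists th, 0 <= th <= A /\ stat_eq L xi a b dw th = 0 /\
    (forall t, 0 <= t < th -> 0 < stat_eq L xi a b dw t) /\
    (forall t, th < t <= PI / 2 -> stat_eq L xi a b dw t < 0).
Proof.
  pose proof acos_dw_div_L_bounds.
  apply decreasing_sign_change.
  - lra.
  - exact continuity_stat_eq.
  - exact stat_eq_0_pos.
  - intros x y hxy hy. apply stat_eq_decreasing; assumption.
  - exact stat_eq_neg.
Qed.

End Objective.

Theorem lemma2 (L xi a b dw : R)
  (hL : 0 < L) (hxi : xi < 0) (ha : 0 < a) (hb : 0 < b)
  (hdw0 : 0 < dw) (hdwL : dw < L) :
  exists th : R,
    (* th maximizes theta |-> f(dw, theta) over [0, pi/2] ... *)
    (0 <= th <= PI / 2 /\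
     forall t, 0 <= t <= PI / 2 -> fobj L xi a b dw t <= fobj L xi a b dw th) /\
    (* ... and is the unique maximizer *)
    (forall th', (0 <= th' <= PI / 2 /\
                  forall t, 0 <= t <= PI / 2 -> fobj L xi a b dw t <= fobj L xi a b dw th') ->
                 th' = th) /\
    (* th solves the stationarity equation, and is its unique solution in [0, pi/2] *)
    stat_eq L xi a b dw th = 0 /\
    (forall t, 0 <= t <= PI / 2 -> stat_eq L xi a b dw t = 0 -> t = th) /\
    (* th lies in [0, arccos(dw/L)] *)
    0 <= th <= acos (dw / L) /\
    (* the partial derivative in theta is negative on [arccos(dw/L), pi/2] *)
    (forall t, acos (dw / L) <= t <= PI / 2 ->
       ex_derive (fun s => fobj L xi a b dw s) t /\
       Derive (fun s => fobj L xi a b dw s) t < 0).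
Proof.
  destruct (stat_eq_sign_change L xi a b dw hxi ha hb hdw0 hdwL)
    as [th [hth [hzero [hpos hneg]]]].
  pose proof (acos_dw_div_L_bounds L dw hdw0 hdwL) as hA.
  pose proof (is_derive_fobj L xi a b dw ha hdw0 hdwL) as hd.
  pose proof (fobj_derive_factor_pos L xi a b dw ha hdw0 hdwL) as hfac.
  assert (hmax : forall t, 0 <= t <= PI / 2 -> t <> th ->
                   fobj L xi a b dw t < fobj L xi a b dw th).
  { eapply (strict_max_of_derive_sign _ _ 0 (PI / 2) th).
    - lra.
    - intros c _. apply hd.
    - intros c hc. apply Rmult_lt_0_compat; [apply hfac | apply hpos; lra].
    - intros c hc. specialize (hneg c hc). specialize (hfac c). nra. }
  exists th. split; [| split; [| split; [| split; [| split]]]].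
  - split; [lra |]. intros t ht.
    destruct (Req_dec t th) as [-> | hne]; [lra | left; apply hmax; assumption].
  - intros th' [ht' hmax']. destruct (Req_dec th' th) as [| hne]; [assumption |].
    pose proof (hmax th' ht' hne). pose proof (hmax' th ltac:(lra)). lra.
  - exact hzero.
  - intros t ht ht0. destruct (Rtotal_order t th) as [h | [h | h]]; [| exact h |].
    + pose proof (hpos t ltac:(lra)). lra.
    + pose proof (hneg t ltac:(lra)). lra.
  - exact hth.
  - intros t ht. split; [eexists; apply hd |].
    erewrite is_derive_unique by apply hd.
    pose proof (stat_eq_neg L xi a b dw hxi ha hb hdw0 hdwL t ht). specialize (hfac t). nra.
Qed.
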